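(* Let $\vec{G}$ be a DDMOG of order $n$ with $imb(\vec{G})=1$. Then there exists a DDMOG $\vec{G'}$ of order $n+1$ with $imb(\vec{G'})=0$ that contains $\vec{G}$ as an induced subgraph.
   Context: An oriented graph is a finite digraph without loops such that whenever $(u,v)$ is an arc, $(v,u)$ is not. For a vertex $v$, $N^+(v)=\{u:(u,v)\text{ is an arc}\}$, $N^-(v)=\{u:(v,u)\text{ is an arc}\}$, $imb(v)=|N^+(v)|-|N^-(v)|$, and the imbalance of the oriented graph is $imb(\vec{G})=\max_{v}|imb(v)|$. For a labeling $f$, $wt_f(v)=\sum_{u\in N^+(v)}f(u)-\sum_{u\in N^-(v)}f(u)$. A difference distance magic (DDM) labeling of an oriented graph on $n$ vertices is a bijection $f:V\to\{1,\dots,n\}$ with $wt_f(v)=0$ for all $v$; a DDMOG (difference distance magic oriented graph) is an oriented graph admitting a DDM labeling. *)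

From mathcomp Require Import all_boot all_order all_algebra.
Set Implicit Arguments. Unset Strict Implicit. Unset Printing Implicit Defensive.
Import Order.TTheory GRing.Theory Num.Theory.

(* An oriented graph on a finite vertex type V is given by its arc relation
   [a : rel V]; [a u v] means (u,v) is an arc. *)
Definition oriented (V : finType) (a : rel V) : Prop :=
  (forall v, ~~ a v v) /\ (forall u v, a u v -> ~~ a v u).

Definition Nplus (V : finType) (a : rel V) (v : V) : {set V} := [set u | a u v].
Definition Nminus (V : finType) (a : rel V) (v : V) : {set V} := [set u | a v u].

Definition imbv (V : finType) (a : rel V) (v : V) : int :=
  (#|Nplus a v|%:Z - #|Nminus a v|%:Z)%R.

Definition imbG (V : finType) (a : rel V) : nat := \max_(v : V) `|imbv a v|%N.

Definition wt (V : finType) (a : rel V) (f : V -> nat) (v : V) : int :=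
  (\sum_(u in Nplus a v) (f u)%:Z - \sum_(u in Nminus a v) (f u)%:Z)%R.

Definition labeling (V : finType) (f : V -> nat) : Prop :=
  injective f /\ (forall v, 1 <= f v <= #|V|) /\
  (forall k, 1 <= k <= #|V| -> exists v, f v = k).

Definition DDM_labeling (V : finType) (a : rel V) (f : V -> nat) : Prop :=
  labeling f /\ forall v, wt a f v = 0%R.

Definition DDMOG (V : finType) (a : rel V) : Prop :=
  oriented a /\ exists f : V -> nat, DDM_labeling a f.

Definition induced_sub (V V' : finType) (a : rel V) (a' : rel V') : Prop :=
  exists phi : V -> V', injective phi /\ forall u v, a' (phi u) (phi v) = a u v.

(* Adjoin a vertex w with an arc v -> w for each v of imbalance 1 and an arc
   w -> v for each v of imbalance -1.  Every old vertex becomes balanced, and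
   so does w since the imbalances of a digraph sum to zero.  Label w by 1 and
   shift the old labels by 1: at an old vertex v the shift adds imb(v) to the
   weight, which the arc between v and w cancels, and at w the weight is
   sum_v imb(v) (f(v) + 1) = - sum_v wt_f(v) = 0 by double counting. *)

From mathcomp Require Import all_boot all_order all_algebra.
From mathcomp Require Import ring zify.
Import GRing.Theory Num.Theory.

Set Implicit Arguments.
Unset Strict Implicit.
Unset Printing Implicit Defensive.
Local Open Scope ring_scope.

Lemma big_option (R : Type) (idx : R) (op : Monoid.com_law idx) (T : finType)
    (F : option T -> R) :
  \big[op/idx]_x F x = op (F None) (\big[op/idx]_t F (Some t)).
Proof.
rewrite (bigD1 None) // (reindex_omap Some id) => [|[]//].
by under eq_bigl do rewrite eqxx.
Qed.

Section IntegerWeights.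

Variables (T : finType) (a : rel T).

Definition wtz (g : T -> int) (v : T) : int :=
  \sum_u (((a u v : nat)%:Z - (a v u : nat)%:Z) * g u).

Lemma wt_wtz (f : T -> nat) v : wt a f v = wtz (fun u => (f u)%:Z) v.
Proof.
rewrite /wt /wtz big_mkcond [X in _ - X]big_mkcond /= -sumrB.
apply: eq_bigr => u _; rewrite !inE.
by case: (a u v); case: (a v u) => /=; ring.
Qed.

Lemma imbv_wtz v : imbv a v = wtz (fun _ => 1) v.
Proof.
rewrite /imbv -[RHS]/(wtz (fun u => (1%N)%:Z) v) -wt_wtz /wt.
by rewrite !sumr_const -!natz.
Qed.

Lemma eq_wtz (g h : T -> int) v : g =1 h -> wtz g v = wtz h v.
Proof. by move=> gh; apply: eq_bigr => u _; rewrite gh. Qed.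

Lemma wtzD (g h : T -> int) v : wtz (g \+ h) v = wtz g v + wtz h v.
Proof.
by rewrite /wtz -big_split; apply: eq_bigr => u _ /=; rewrite mulrDr.
Qed.

Lemma sum_wtz_mul_skew (g h : T -> int) :
  \sum_v wtz g v * h v = - \sum_v wtz h v * g v.
Proof.
rewrite /wtz -sumrN; under eq_bigr do rewrite mulr_suml.
rewrite exchange_big; apply: eq_bigr => u _; rewrite mulr_suml -sumrN.
by apply: eq_bigr => v _; ring.
Qed.

Lemma sum_imbv_mul (h : T -> int) : \sum_v imbv a v * h v = - \sum_v wtz h v.
Proof.
rewrite (eq_bigr _ (fun v _ => congr1 (fun x => x * h v) (imbv_wtz v))).
by rewrite sum_wtz_mul_skew; under eq_bigr do rewrite mulr1.
Qed.

Lemma sum_imbv : \sum_v imbv a v = 0.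
Proof.
have := sum_imbv_mul (fun _ => 1); under eq_bigr do rewrite mulr1.
under [in RHS]eq_bigr do rewrite -imbv_wtz.
by move/eqP; rewrite -subr_eq0 opprK -mulr2n mulrn_eq0 => /eqP.
Qed.

End IntegerWeights.

Lemma eq1_sub_eqN1 (z : int) :
  (`|z| <= 1)%N -> (z == 1 : nat)%:Z - (z == -1 : nat)%:Z = z.
Proof. by case: z => [[|[|n]]|[|n]]. Qed.

Section BalancingExtension.

Variables (V : finType) (a : rel V).

Definition balancing_ext : rel (option V) := fun x y =>
  match x, y with
  | Some u, Some v => a u v
  | Some u, None => imbv a u == 1
  | None, Some v => imbv a v == -1
  | None, None => false
  end.

Lemma oriented_balancing_ext : oriented a -> oriented balancing_ext.
Proof.
move=> [irr asym]; split=> [[v|] //|[u|] [v|] //=]; first exact: irr.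
- exact: asym.
- by move/eqP->.
- by move/eqP->.
Qed.

Lemma induced_sub_balancing_ext : induced_sub a balancing_ext.
Proof. by exists Some; split=> //; apply: Some_inj. Qed.

Definition ext_label (f : V -> nat) (x : option V) : nat :=
  if x is Some v then (f v).+1 else 1%N.

Lemma labeling_ext_label f : labeling f -> labeling (ext_label f).
Proof.
move=> [f_inj [f_range f_onto]]; rewrite /labeling card_option; split; [|split].
- move=> [u|] [v|] //= [].
  + by move/f_inj->.
  + by move=> fu0; have := f_range u; rewrite fu0.
  + by move=> fv0; have := f_range v; rewrite -fv0.
- by move=> [v|] //=; rewrite ltnS; case/andP: (f_range v).
- move=> [|k] k_range; first lia.
  have [->|k_gt0] := posnP k; first by exists None.
  by have [|v fv] := f_onto k; [lia | exists (Some v); rewrite /= fv].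
Qed.

Hypothesis imbv_le1 : forall v, (`|imbv a v| <= 1)%N.

Lemma wtz_balancing_ext_Some (g : option V -> int) v :
  wtz balancing_ext g (Some v) = wtz a (g \o Some) v - imbv a v * g None.
Proof.
rewrite /wtz big_option /= addrC; congr (_ + _).
rewrite -[in RHS](eq1_sub_eqN1 (imbv_le1 v)).
by case: (imbv a v == 1); case: (imbv a v == -1) => /=; ring.
Qed.

Lemma wtz_balancing_ext_None (g : option V -> int) :
  wtz balancing_ext g None = \sum_v imbv a v * g (Some v).
Proof.
rewrite /wtz big_option /= mul0r add0r; apply: eq_bigr => v _.
by rewrite eq1_sub_eqN1.
Qed.

Lemma imbv_balancing_ext x : imbv balancing_ext x = 0.
Proof.
rewrite imbv_wtz; case: x => [v|].
  by rewrite wtz_balancing_ext_Some -imbv_wtz mulr1 subrr.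
rewrite wtz_balancing_ext_None.
by under eq_bigr do rewrite mulr1; apply: sum_imbv.
Qed.

Lemma imbG_balancing_ext : imbG balancing_ext = 0%N.
Proof. by rewrite /imbG big1 // => x _; rewrite imbv_balancing_ext. Qed.

Lemma wt_balancing_ext f :
  (forall v, wt a f v = 0) -> forall x, wt balancing_ext (ext_label f) x = 0.
Proof.
move=> wt0 x; rewrite wt_wtz; case: x => [v|].
  rewrite wtz_balancing_ext_Some mulr1.
  rewrite (@eq_wtz _ _ _ ((fun u => (f u)%:Z) \+ (fun _ => 1))); last first.
    by move=> u; rewrite /= -addn1 PoszD.
  by rewrite wtzD -wt_wtz -imbv_wtz wt0 add0r subrr.
rewrite wtz_balancing_ext_None /=.
under eq_bigr do rewrite -addn1 PoszD mulrDr mulr1.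
rewrite big_split /= sum_imbv addr0 sum_imbv_mul.
by rewrite big1 ?oppr0 // => v _; rewrite -wt_wtz.
Qed.

Lemma DDMOG_balancing_ext : DDMOG a -> DDMOG balancing_ext.
Proof.
move=> [a_or [f [f_lab wt0]]]; split; first exact: oriented_balancing_ext.
exists (ext_label f); split; first exact: labeling_ext_label.
exact: wt_balancing_ext.
Qed.

End BalancingExtension.

Section Relabeling.

Variables (W U : finType) (h : W -> U).
Hypothesis h_bij : bijective h.

Lemma oriented_relpre (b : rel U) : oriented b -> oriented (relpre h b).
Proof.
by move=> [irr asym]; split=> [x|x y] /=; [apply: irr | apply: asym].
Qed.

Lemma wtz_relpre (b : rel U) (g : U -> int) x :
  wtz (relpre h b) (g \o h) x = wtz b g (h x).
Proof. by rewrite /wtz (reindex h) //; apply: onW_bij. Qed.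

Lemma imbv_relpre (b : rel U) x : imbv (relpre h b) x = imbv b (h x).
Proof. by rewrite !imbv_wtz -wtz_relpre. Qed.

Lemma imbG_relpre (b : rel U) : imbG (relpre h b) = imbG b.
Proof.
rewrite /imbG (reindex h) /=; last exact: onW_bij.
by apply: eq_bigr => x _; rewrite imbv_relpre.
Qed.

Lemma labeling_comp (f : U -> nat) : labeling f -> labeling (f \o h).
Proof.
move=> [f_inj [f_range f_onto]]; rewrite /labeling (bij_eq_card h_bij).
split; [exact: inj_comp (bij_inj h_bij) | split=> [x|k /f_onto [u fu]]].
  exact: f_range.
by case: h_bij => h' _ h'K; exists (h' u); rewrite /= h'K.
Qed.

Lemma DDMOG_relpre (b : rel U) : DDMOG b -> DDMOG (relpre h b).
Proof.
move=> [b_or [f [f_lab wt0]]]; split; first exact: oriented_relpre.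
exists (f \o h); split; first exact: labeling_comp.
by move=> x; rewrite wt_wtz (wtz_relpre b (fun u => (f u)%:Z)) -wt_wtz.
Qed.

Lemma induced_sub_relpre (V : finType) (a : rel V) (b : rel U) :
  induced_sub a b -> induced_sub a (relpre h b).
Proof.
case: h_bij => h' _ h'K [phi [phi_inj phi_hom]].
exists (h' \o phi); split; first exact: inj_comp (can_inj h'K) phi_inj.
by move=> u v /=; rewrite !h'K phi_hom.
Qed.

End Relabeling.

Local Close Scope ring_scope.

Theorem theorem1 (V : finType) (a : rel V) :
  DDMOG a -> imbG a = 1 ->
  exists a' : rel 'I_(#|V|).+1,
    DDMOG a' /\ imbG a' = 0 /\ induced_sub a a'.
Proof.
move=> a_ddm imbG1.
have imbv_le1 v : (`|imbv a v| <= 1)%N.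
  by rewrite -imbG1; apply: (leq_bigmax (F := fun v => `|imbv a v|%N)).
pose h := @enum_val _ {: option V} \o cast_ord (esym (card_option V)).
have h_bij : bijective h.
  apply: bij_comp; first exact: enum_val_bij.
  by exists (cast_ord (card_option V)); [apply: cast_ordKV | apply: cast_ordK].
exists (relpre h (balancing_ext a)); split; [|split].
- exact/DDMOG_relpre/DDMOG_balancing_ext.
- by rewrite imbG_relpre // imbG_balancing_ext.
- exact/induced_sub_relpre/induced_sub_balancing_ext.
Qed.
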